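(* Let $H:\mathbb{R}\to\mathbb{R}$ be strictly increasing and define $F_H:\mathbb{S}(N)\to\mathbb{R}$ by $F_H(X)=-\sum_{j=1}^N H(\lambda_j(X))$, regarded as a function on $\mathcal{D}=\Omega\times\mathbb{R}\times\mathbb{R}^N\times\mathbb{S}(N)$ depending only on the matrix entry. Then $F_H$ belongs to Class M if and only if $H$ is unbounded above and unbounded below.
   Context: $\mathbb{S}(N)$ is the space of real symmetric $N\times N$ matrices with the Löwner order; $\lambda_1(X)\le\dots\le\lambda_N(X)$ are the eigenvalues of $X$. Class M (for $F:\mathcal{D}\to\mathbb{R}$, $\mathcal{D}\subseteq\Omega\times\mathbb{R}\times\mathbb{R}^N\times\mathbb{S}(N)$): $F$ is continuous in its matrix entry, and for every $\omega$ and sets $\mathcal{S}_1,\mathcal{S}_2\subseteq\mathbb{S}(N)$ with $\{\omega\}\times\mathcal{S}_i\subseteq\mathcal{D}$, there exist $g_i:\mathbb{R}\times\mathcal{S}_i\to\mathbb{R}$ (possibly depending on $\omega$) such that: (1) for each fixed $M_0\in\mathcal{S}_i$, $t\mapsto g_i(t,M_0)$ is an increasing bijection $\mathbb{R}\to\mathbb{R}$, with inverse $s\mapsto g_i(-,M_0)^{-1}(s)$; (2) $M\mapsto g_i(-,M)^{-1}(0)$ is continuous on $\mathcal{S}_i$; (3) for $M\in\mathcal{S}_1$, if $(\omega,X)\in\mathcal{D}$ and $X\le M$ then $-F(\omega,X)\le g_1(\lambda_1(X),M)$; (4) for $M\in\mathcal{S}_2$, if $(\omega,Y)\in\mathcal{D}$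 and $-Y\le M$ then $-F(\omega,Y)\ge g_2(\lambda_N(Y),M)$.
   Formalization: H is assumed continuous as well as strictly increasing, a hypothesis that applies to both directions of the equivalence. The statement above fails without it. *)

From HB Require Import structures.
From mathcomp Require Import all_boot all_order all_algebra.
From mathcomp Require Import all_classical all_reals all_analysis.
From Stdlib Require Import ClassicalEpsilon.
Set Implicit Arguments. Unset Strict Implicit. Unset Printing Implicit Defensive.
Import Order.TTheory GRing.Theory Num.Theory.
Import numFieldNormedType.Exports.
Local Open Scope classical_set_scope.
Local Open Scope ring_scope.

Section Defs.
Variable R : realType.
Variable N : nat.

Definition symmx : set 'M[R]_N := [set X | X^T = X].

Definition loewner_le (X M : 'M[R]_N) : Prop :=
  forall v : 'cV[R]_N, 0 <= (v^T *m (M - X) *m v) 0 0.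

(* The eigenvalues of X (with multiplicity, in nondecreasing order):
   the sorted list s with char_poly X = prod_(x <- s) ('X - x).
   Such a list exists (and is unique) for every real symmetric matrix;
   for other matrices the value is irrelevant. *)
Definition is_eigseq (X : 'M[R]_N) (s : seq R) : Prop :=
  sorted <=%R s /\ char_poly X = \prod_(x <- s) ('X - x%:P).

Definition eigs (X : 'M[R]_N) : seq R :=
  epsilon (inhabits [::]) (is_eigseq X).

(* lambda_j(X), j = 1..N, stored at index j-1 *)
Definition eig (X : 'M[R]_N) (j : nat) : R := nth 0 (eigs X) j.
Definition lambda_min (X : 'M[R]_N) : R := eig X 0.
Definition lambda_max (X : 'M[R]_N) : R := eig X N.-1.

(* Class M for F defined on D = Omega x R x R^N x S(N)
   (all inequalities are required for every value of the r and p entries). *)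
Definition ClassM (Omega : Type)
    (F : Omega -> R -> 'rV[R]_N -> 'M[R]_N -> R) : Prop :=
  (forall w r p, {within symmx, continuous (F w r p)}) /\
  forall (w : Omega) (S1 S2 : set 'M[R]_N),
    S1 `<=` symmx -> S2 `<=` symmx ->
    exists (g1 g2 : R -> 'M[R]_N -> R) (h1 h2 : 'M[R]_N -> R),
      (forall M0, S1 M0 ->
         (forall s t, s <= t -> g1 s M0 <= g1 t M0) /\ bijective (g1 ^~ M0)
         /\ g1 (h1 M0) M0 = 0) /\
      (forall M0, S2 M0 ->
         (forall s t, s <= t -> g2 s M0 <= g2 t M0) /\ bijective (g2 ^~ M0)
         /\ g2 (h2 M0) M0 = 0) /\
      {within S1, continuous h1} /\ {within S2, continuous h2} /\
      (forall M, S1 M -> forall r p X, symmx X -> loewner_le X M ->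
         - F w r p X <= g1 (lambda_min X) M) /\
      (forall M, S2 M -> forall r p Y, symmx Y -> loewner_le (- Y) M ->
         - F w r p Y >= g2 (lambda_max Y) M).

Definition F_H (Omega : Type) (H : R -> R)
    (w : Omega) (r : R) (p : 'rV[R]_N) (X : 'M[R]_N) : R :=
  - \sum_(j < N) H (eig X j).

End Defs.

(* For symmetric X, unitarily diagonalizing over R[i] and intersecting
   eigenspaces (Courant-Fischer) gives Weyl's bound
   |lambda_k(X) - lambda_k(Y)| <= N^2 |X - Y| (|.| the max-entry norm), so
   eigenvalues, hence F_H, are continuous on S(N).  If X <= M, testing X
   against an eigenvector shows that every eigenvalue of X is at most
   c(M) = N^2 |M|, so -F_H(X) <= H(lambda_1(X)) + (N-1) H(c(M)), and dually
   -F_H(Y) >= H(lambda_N(Y)) + (N-1) H(-c(M)) when -Y <= M.  When H is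
   unbounded both ways it is a continuous increasing bijection of R, and
   g_1(t, M) = H(t) + (N-1) H(c(M)), g_2(t, M) = H(t) + (N-1) H(-c(M)) witness
   Class M, with zeros H^-1(-(N-1) H(+-c(M))) continuous in M.  Conversely,
   taking S_1 = S_2 = {0} and testing (3), (4) on the scalar matrices t I gives
   N H(t) <= g_1(t, 0) for t <= 0 and N H(t) >= g_2(t, 0) for t >= 0; since
   g_i(-, 0) are increasing bijections, H is unbounded below and above. *)

From HB Require Import structures.
From mathcomp Require Import all_boot all_order all_algebra.
From mathcomp Require Import all_classical all_reals all_analysis.
From mathcomp Require Import complex spectral sesquilinear lra zify.
From Stdlib Require Import ClassicalEpsilon.
Import Order.TTheory GRing.Theory Num.Theory.
Import numFieldNormedType.Exports.
Set Implicit Arguments. Unset Strict Implicit. Unset Printing Implicit Defensive.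
Local Open Scope ring_scope.

Section SquaredNorm.
Variables (C : numDomainType) (n : nat).
Implicit Types u v w : 'rV[C]_n.

Definition sqnorm v : C := \sum_i `|v 0 i| ^+ 2.

Lemma sqr_norm_le_sqnorm v i : `|v 0 i| ^+ 2 <= sqnorm v.
Proof. by rewrite /sqnorm (bigD1 i) //= lerDl sumr_ge0. Qed.

Lemma sqnorm_gt0 v : v != 0 -> 0 < sqnorm v.
Proof.
case/rV0Pn => i vi_neq0; rewrite /sqnorm (bigD1 i) //= ltr_wpDr ?sumr_ge0 //.
by rewrite exprn_gt0 ?normr_gt0.
Qed.

Lemma normr_mul_le_of_sqr (c x y : C) :
  `|x| ^+ 2 <= c -> `|y| ^+ 2 <= c -> `|x| * `|y| <= c.
Proof.
move=> xc yc; rewrite -(ler_pMn2r (isT : (0 < 2)%N)).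
apply: le_trans (real_leif_mean_square_scaled _ _) _; rewrite ?realE ?normr_ge0 //.
by rewrite mulr2n lerD.
Qed.

Lemma norm_bilinear_le (D : 'M[C]_n) u w (d c : C) :
  (forall i j, `|D i j| <= d) -> sqnorm u <= c -> sqnorm w <= c ->
  `|(u *m D *m w^T) 0 0| <= (n ^ 2)%:R * d * c.
Proof.
move=> Dd uc wc; rewrite mxE; apply: le_trans (ler_norm_sum _ _ _) _.
have -> : (n ^ 2)%:R * d * c = \sum_(j < n) \sum_(i < n) d * c.
  by rewrite !sumr_const !card_ord -mulrnA -[RHS]mulr_natl mulrA.
apply: ler_sum => j _; rewrite mxE normrM.
apply: le_trans (ler_wpM2r (normr_ge0 _) (ler_norm_sum _ _ _)) _.
rewrite mulr_suml; apply: ler_sum => i _; rewrite !mxE !normrM mulrAC mulrC.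
apply: ler_pM; rewrite ?mulr_ge0 //.
by apply: normr_mul_le_of_sqr; [apply: le_trans uc | apply: le_trans wc];
  exact: sqr_norm_le_sqnorm.
Qed.

End SquaredNorm.

Section Weyl.
Variables (C : numClosedFieldType) (N : nat).
Local Open Scope sesquilinear_scope.
Implicit Types (P : 'M[C]_N) (v : 'rV[C]_N) (S : {set 'I_N}).

Definition qform (A : 'M[C]_N) v : C := (v *m A *m v^t*) 0 0.

Lemma sqnormE v : sqnorm v = (v *m v^t*) 0 0.
Proof. by rewrite mxE; apply: eq_bigr => i _; rewrite !mxE normCK. Qed.

Lemma norm_qform_le (A : 'M[C]_N) v (d : C) : (forall i j, `|A i j| <= d) ->
  `|qform A v| <= (N ^ 2)%:R * d * sqnorm v.
Proof.
move=> Ad; rewrite /qform -map_trmx; apply: norm_bilinear_le => //.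
suff -> : sqnorm (map_mx Num.conj v) = sqnorm v by [].
by apply: eq_bigr => i _; rewrite mxE norm_conjC.
Qed.

Lemma qformB (A B : 'M[C]_N) v : qform (A - B) v = qform A v - qform B v.
Proof. by rewrite /qform mulmxBr mulmxBl [LHS]mxE [X in _ + X]mxE. Qed.

Lemma sqnorm_unitary P v : P \is unitarymx -> sqnorm (v *m P^t*) = sqnorm v.
Proof.
by move=> Pu; rewrite !sqnormE trmx_mul map_mxM trmxCK mulmxA mulmxKtV.
Qed.

Lemma qform_diag P (a : 'rV[C]_N) v : P \is unitarymx ->
  qform (P^t* *m diag_mx a *m P) v = \sum_j `|(v *m P^t*) 0 j| ^+ 2 * a 0 j.
Proof.
move=> Pu; rewrite /qform; have -> : v *m (P^t* *m diag_mx a *m P) *m v^t* =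
    (v *m P^t*) *m diag_mx a *m (v *m P^t*)^t*.
  by rewrite trmx_mul map_mxM trmxCK !mulmxA.
rewrite mxE; apply: eq_bigr => j _.
by rewrite mul_mx_diag !mxE normCK mulrAC.
Qed.

Lemma qform_diag_real P (a : 'rV[C]_N) v : P \is unitarymx ->
  (forall j, a 0 j \is Num.real) -> qform (P^t* *m diag_mx a *m P) v \is Num.real.
Proof.
move=> Pu ar; rewrite qform_diag //; apply: rpred_sum => j _.
by rewrite realM // ger0_real.
Qed.

Definition rows_in S P : 'M[C]_(#|S|, N) := rowsub (@enum_val _ (mem S)) P.

Lemma rows_in_unitary S P : P \is unitarymx -> rows_in S P \is unitarymx.
Proof.
move=> /unitarymxP PPt; apply/unitarymxP/matrixP => i j.
have := congr1 (fun A : 'M[C]_N => A (enum_val i) (enum_val j)) PPt.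
rewrite !mxE (inj_eq enum_val_inj) => <-.
by apply: eq_bigr => k _; rewrite !mxE.
Qed.

Lemma rows_in_coord0 S P v j : P \is unitarymx ->
  (v <= rows_in S P)%MS -> j \notin S -> (v *m P^t*) 0 j = 0.
Proof.
move=> Pu /submxP [D ->] jS; rewrite /rows_in rowsubE mulmxA mulmxtVK //.
rewrite mxE big1 // => i _; rewrite !mxE; case: eqP => [ij|]; last by rewrite mulr0.
by move: jS; rewrite -ij enum_valP.
Qed.

Lemma qform_diag_ge P (a : 'rV[C]_N) S v (al : C) : P \is unitarymx ->
  (v <= rows_in S P)%MS -> {in S, forall j, al <= a 0 j} ->
  al * sqnorm v <= qform (P^t* *m diag_mx a *m P) v.
Proof.
move=> Pu vS aS; rewrite qform_diag // -(sqnorm_unitary v Pu) mulr_sumr.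
apply: ler_sum => j _; have [jS|jS] := boolP (j \in S).
  by rewrite mulrC; apply: ler_wpM2l; rewrite ?exprn_ge0 ?aS.
by rewrite (rows_in_coord0 Pu vS jS) normr0 expr0n /= !mul0r mulr0.
Qed.

Lemma qform_diag_le P (a : 'rV[C]_N) S v (be : C) : P \is unitarymx ->
  (v <= rows_in S P)%MS -> {in S, forall j, a 0 j <= be} ->
  qform (P^t* *m diag_mx a *m P) v <= be * sqnorm v.
Proof.
move=> Pu vS aS; rewrite qform_diag // -(sqnorm_unitary v Pu) mulr_sumr.
apply: ler_sum => j _; have [jS|jS] := boolP (j \in S).
  by rewrite [leRHS]mulrC; apply: ler_wpM2l; rewrite ?exprn_ge0 ?aS.
by rewrite (rows_in_coord0 Pu vS jS) normr0 expr0n /= !mul0r mulr0.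
Qed.

Lemma diag_weyl P Q (a b : 'rV[C]_N) (al be de : C) :
  P \is unitarymx -> Q \is unitarymx ->
  (forall j, a 0 j \is Num.real) -> (forall j, b 0 j \is Num.real) ->
  (forall v, `|qform (P^t* *m diag_mx a *m P - Q^t* *m diag_mx b *m Q) v|
               <= de * sqnorm v) ->
  (N < #|[set i | (al <= a 0 i)%R]| + #|[set j | (b 0 j <= be)%R]|)%N ->
  al <= be + de.
Proof.
move=> Pu Qu ar br qAB.
set I := [set i | (al <= a 0 i)%R]; set J := [set j | (b 0 j <= be)%R] => card_gt.
(* The two spans have dimensions adding up to more than N, so they meet. *)
have [v vIJ v_neq0] :
    exists2 v : 'rV[C]_N, (v <= rows_in I P :&: rows_in J Q)%MS & v != 0.
  apply/rowV0Pn; rewrite -mxrank_eq0.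
  have := mxrank_sum_cap (rows_in I P) (rows_in J Q).
  have := rank_leq_col (rows_in I P + rows_in J Q)%MS.
  rewrite !(mxrank_unitary (rows_in_unitary _ _)) // => le_sum sum_cap.
  by apply: contraTneq card_gt => cap0; rewrite -sum_cap cap0 addn0 -leqNgt.
have geA : al * sqnorm v <= qform (P^t* *m diag_mx a *m P) v.
  by apply: qform_diag_ge (submx_trans vIJ (capmxSl _ _)) _ => // j; rewrite inE.
have leB : qform (Q^t* *m diag_mx b *m Q) v <= be * sqnorm v.
  by apply: qform_diag_le (submx_trans vIJ (capmxSr _ _)) _ => // j; rewrite inE.
have := qAB v; rewrite qformB => leAB.
have realAB := rpredB (qform_diag_real v Pu ar) (qform_diag_real v Qu br).
rewrite -(ler_pM2r (sqnorm_gt0 v_neq0)) mulrDl; apply: le_trans geA _.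
rewrite -[qform _ v](subrK (qform (Q^t* *m diag_mx b *m Q) v)) addrC.
by apply: lerD => //; apply: le_trans (real_ler_norm realAB) leAB.
Qed.

End Weyl.

Lemma char_poly_similar (F : fieldType) n (P A : 'M[F]_n) : P \in unitmx ->
  char_poly (invmx P *m A *m P) = char_poly A.
Proof.
move=> Pu; rewrite /char_poly /char_poly_mx.
set mp := map_mx (@polyC F).
have XE : 'X%:M = mp (invmx P) *m 'X%:M *m mp P.
  by rewrite mul_mx_scalar -scalemxAl /mp -map_mxM mulVmx // map_mx1 scalemx1.
rewrite /mp !map_mxM -/mp {1}XE -mulmxBl -mulmxBr !det_mulmx mulrC mulrA.
by rewrite -det_mulmx /mp -map_mxM mulmxV // map_mx1 det1 mul1r.
Qed.

Section SortedCount.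
Variables (d : Order.disp_t) (T : porderType d) (x0 : T).
Implicit Type s : seq T.

Lemma count_ge_nth s k : sorted <=%O s -> (k < size s)%N ->
  (size s - k <= count (fun x => nth x0 s k <= x)%O s)%N.
Proof.
move=> s_sorted ks; rewrite -[s in count _ s](cat_take_drop k) count_cat.
have /eqP -> : count (fun x => nth x0 s k <= x)%O (drop k s) == size (drop k s).
  rewrite -all_count; apply/(all_nthP x0) => i; rewrite size_drop nth_drop => ik.
  by apply: (sorted_leq_nth le_trans le_refl); rewrite ?inE ?leq_addr // -ltn_subRL.
by rewrite size_drop leq_addl.
Qed.

Lemma count_le_nth s k : sorted <=%O s -> (k < size s)%N ->
  (k.+1 <= count (fun x => x <= nth x0 s k)%O s)%N.
Proof.
move=> s_sorted ks; rewrite -[s in count _ s](cat_take_drop k.+1) count_cat.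
have /eqP -> : count (fun x => x <= nth x0 s k)%O (take k.+1 s) == size (take k.+1 s).
  rewrite -all_count; apply/(all_nthP x0) => i.
  rewrite size_takel // => ik; rewrite nth_take //.
  by apply: (sorted_leq_nth le_trans le_refl); rewrite ?inE // (leq_ltn_trans _ ks).
by rewrite size_takel // leq_addr.
Qed.

End SortedCount.

Lemma norm_entry_le_mx_norm (K : realDomainType) m n (A : 'M[K]_(m, n)) i j :
  `|A i j| <= `|A|.
Proof.
by rewrite [leRHS]/Num.norm /= mx_normrE; apply/bigmax_geP; right; exists (i, j).
Qed.

Section RealSymmetric.
Variables (R : realType) (N : nat).
Local Open Scope sesquilinear_scope.
Local Notation toC := (real_complex R).
Implicit Types X Y : 'M[R]_N.

Lemma real_complex_real (x : R) : toC x \is Num.real.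
Proof. by apply/complex_realP; exists x. Qed.

Lemma norm_real_complex (x : R) : `|toC x| = toC `|x|.
Proof. by rewrite normc_def /= expr0n addr0 sqrtr_sqr. Qed.

(* MathComp's spectral theorem lives over an algebraically closed field, so a
   real symmetric matrix is diagonalized as a Hermitian matrix over R[i]. *)
Definition unitary_diagonalization X (P : 'M[R[i]]_N) (a : 'I_N -> R) :=
  P \is unitarymx /\ map_mx toC X = P^t* *m diag_mx (\row_i toC (a i)) *m P.

Lemma symmetric_unitary_diagonalization X : X^T = X ->
  exists P a, unitary_diagonalization X P a.
Proof.
move=> XtX; have XC_herm : map_mx toC X \is hermsymmx.
  apply: realsym_hermsym; last by apply/mxOverP => i j; rewrite mxE real_complex_real.
  apply/is_hermitianmxP; rewrite expr0 scale1r.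
  by apply/matrixP => i j; rewrite !mxE /= -{1}XtX mxE.
have /mxOverP XC_real := hermitian_spectral_diag_real XC_herm.
have /orthomx_spectralP := hermitian_normalmx XC_herm.
rewrite invmx_unitary ?spectral_unitarymx // => XCE.
exists (spectralmx (map_mx toC X)).
exists (fun i => complex.Re (spectral_diag (map_mx toC X) 0 i)).
split; first exact: spectral_unitarymx.
rewrite {1}XCE; congr (_ *m diag_mx _ *m _); apply/rowP => i; rewrite mxE.
by have /complex_realP [x ->] := XC_real 0 i.
Qed.

Lemma char_poly_diagonalization X P a : unitary_diagonalization X P a ->
  char_poly X = \prod_i ('X - (a i)%:P).
Proof.
move=> [Pu XCE]; apply: (@map_poly_inj _ _ toC).
rewrite map_char_poly XCE -invmx_unitary // char_poly_similar ?unitarymx_unit //.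
rewrite char_poly_trig ?diag_mx_is_trig // map_prod_XsubC.
by apply: eq_bigr => i _; rewrite !mxE eqxx mulr1n.
Qed.

Lemma eigs_spec X : X^T = X -> is_eigseq X (eigs X).
Proof.
move=> /symmetric_unitary_diagonalization [P [a /char_poly_diagonalization XE]].
apply: epsilon_spec; exists (sort <=%R [seq a i | i <- enum 'I_N]); split.
  exact: (sort_sorted le_total).
by rewrite XE (perm_big _ (permEl (perm_sort _ _))) big_map big_enum.
Qed.

Lemma perm_eigs X P a : X^T = X -> unitary_diagonalization X P a ->
  perm_eq (eigs X) [seq a i | i <- enum 'I_N].
Proof.
move=> /eigs_spec [_ eigsE] /char_poly_diagonalization XE.
by apply: prod_XsubC_eq; rewrite -eigsE XE big_map big_enum.
Qed.

Lemma size_eigs X : X^T = X -> size (eigs X) = N.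
Proof.
move=> XtX; have [P [a Xdiag]] := symmetric_unitary_diagonalization XtX.
by rewrite (perm_size (perm_eigs XtX Xdiag)) size_map size_enum_ord.
Qed.

Lemma eig_eigenvalue X j : X^T = X -> (j < N)%N -> eigenvalue X (eig X j).
Proof.
move=> XtX jN; have [_ eigsE] := eigs_spec XtX.
rewrite eigenvalue_root_char eigsE root_prod_XsubC.
by apply: mem_nth; rewrite size_eigs.
Qed.

Lemma card_eigs X P a (p : pred R) : X^T = X -> unitary_diagonalization X P a ->
  #|[set i | p (a i)]| = count p (eigs X).
Proof.
move=> XtX Xdiag; rewrite (permP (perm_eigs XtX Xdiag)) count_map.
by rewrite cardsE cardE /enum_mem size_filter (@eq_filter _ _ predT) ?filter_predT.
Qed.

Lemma eig_le_weyl X Y k : X^T = X -> Y^T = Y -> (k < N)%N ->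
  eig X k <= eig Y k + (N ^ 2)%:R * `|X - Y|.
Proof.
move=> XtX YtY kN.
have [P [a Xdiag]] := symmetric_unitary_diagonalization XtX.
have [Q [b Ydiag]] := symmetric_unitary_diagonalization YtY.
have [[sortedX _] [sortedY _]] := (eigs_spec XtX, eigs_spec YtY).
rewrite -lecR rmorphD rmorphM /= rmorph_nat.
apply: (diag_weyl (a := \row_i toC (a i)) (b := \row_i toC (b i)) Xdiag.1 Ydiag.1)
  => [i|j|v|].
- by rewrite mxE real_complex_real.
- by rewrite mxE real_complex_real.
- rewrite -Xdiag.2 -Ydiag.2 -map_mxB; apply: norm_qform_le => i j.
  by rewrite mxE norm_real_complex lecR norm_entry_le_mx_norm.
have -> : [set i | toC (eig X k) <= (\row_i toC (a i)) 0 i] = [set i | eig X k <= a i].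
  by apply/setP => i; rewrite !inE mxE lecR.
have -> : [set j | (\row_i toC (b i)) 0 j <= toC (eig Y k)] = [set j | b j <= eig Y k].
  by apply/setP => j; rewrite !inE mxE lecR.
(* At least N - k of the a_i lie above lambda_k(X), at least k + 1 of the b_j
   below lambda_k(Y). *)
rewrite (card_eigs (fun x => eig X k <= x) XtX Xdiag).
rewrite (card_eigs (fun x => x <= eig Y k) YtY Ydiag).
have := count_ge_nth 0 sortedX; have := count_le_nth 0 sortedY.
rewrite /eig !size_eigs // => /(_ k kN) + /(_ k kN).
by move: (count _ (eigs X)) (count _ (eigs Y)) => cX cY; lia.
Qed.

Lemma eig_lipschitz X Y k : X^T = X -> Y^T = Y -> (k < N)%N ->
  `|eig X k - eig Y k| <= (N ^ 2)%:R * `|X - Y|.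
Proof.
move=> XtX YtY kN; have := eig_le_weyl XtX YtY kN.
have := eig_le_weyl YtY XtX kN; rewrite distrC ler_norml => *.
by apply/andP; split; lra.
Qed.

End RealSymmetric.

Lemma eigenvalueN (F : fieldType) n (A : 'M[F]_n) x :
  eigenvalue A x -> eigenvalue (- A) (- x).
Proof.
case/eigenvalueP => v vA v_neq0; apply/eigenvalueP.
by exists v; rewrite ?mulmxN ?vA ?scaleNr.
Qed.

Section Loewner.
Variables (R : realType) (N : nat).
Implicit Types X Y M : 'M[R]_N.

Definition eig_bound M : R := (N ^ 2)%:R * `|M|.

Lemma sqnorm_real (v : 'rV[R]_N) : sqnorm v = (v *m v^T) 0 0.
Proof. by rewrite mxE; apply: eq_bigr => i _; rewrite !mxE real_normK ?num_real. Qed.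

Lemma eigenvalue_le_loewner X M x : loewner_le X M -> eigenvalue X x ->
  x <= eig_bound M.
Proof.
move=> XM /eigenvalueP [v vX v_neq0]; rewrite -(ler_pM2r (sqnorm_gt0 v_neq0)).
have := XM v^T; rewrite trmxK mulmxBr mulmxBl vX -scalemxAl mxE [X in _ + X]mxE.
rewrite [X in _ - X]mxE -sqnorm_real subr_ge0 => /le_trans; apply.
apply: le_trans (ler_norm _) _; apply: norm_bilinear_le => //.
exact: norm_entry_le_mx_norm.
Qed.

Lemma eig_le_loewner X M j : X^T = X -> loewner_le X M -> (j < N)%N ->
  eig X j <= eig_bound M.
Proof. by move=> XtX XM jN; apply: eigenvalue_le_loewner XM (eig_eigenvalue XtX jN). Qed.

Lemma eig_ge_loewner Y M j : Y^T = Y -> loewner_le (- Y) M -> (j < N)%N ->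
  - eig_bound M <= eig Y j.
Proof.
move=> YtY YM jN; rewrite lerNl.
exact: eigenvalue_le_loewner YM (eigenvalueN (eig_eigenvalue YtY jN)).
Qed.

Lemma eig_scalar (t : R) j : (j < N)%N -> eig (t%:M : 'M[R]_N) j = t.
Proof.
move=> jN; have /eigenvalueP [v] := eig_eigenvalue (tr_scalar_mx _ t) jN.
rewrite mul_mx_scalar => /eqP; rewrite -subr_eq0 -scalerBl scaler_eq0 subr_eq0.
by case/orP => [/eqP <-|/eqP ->]; rewrite ?eqxx.
Qed.

Lemma loewner_scalar_le0 (t : R) : t <= 0 -> loewner_le (t%:M : 'M[R]_N) 0.
Proof.
move=> t_le0 v; rewrite sub0r mulmxN mulNmx mul_mx_scalar -scalemxAl !mxE.
by rewrite -mulNr mulr_ge0 ?oppr_ge0 // sumr_ge0 // => i _; rewrite !mxE -expr2 sqr_ge0.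
Qed.

End Loewner.

Local Open Scope classical_set_scope.

Lemma lipschitz_within_continuous (K : realFieldType) (V : normedModType K)
    (A : set V) (f : V -> K) (k : K) :
  (forall x y, A x -> A y -> `|f x - f y| <= k * `|x - y|) ->
  {within A, continuous f}.
Proof.
move=> f_lip; apply/subspace_continuousP => x Ax; apply/cvgrPdist_lt => e e_gt0.
have k1_gt0 : 0 < `|k| + 1 by rewrite ltr_wpDl.
rewrite near_withinE; near=> y => Ay; apply: le_lt_trans (f_lip x y Ax Ay) _.
apply: (@le_lt_trans _ _ ((`|k| + 1) * `|x - y|)).
  by rewrite ler_wpM2r // (le_trans (ler_norm k)) // lerDl.
rewrite -ltr_pdivlMl // mulrC; near: y.
exact: (@cvgr_dist_lt _ _ _ (nbhs x) _ id x cvg_id _ (divr_gt0 e_gt0 k1_gt0)).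
Unshelve. all: by end_near. Qed.

Lemma eig_continuous (R : realType) N k : (k < N)%N ->
  {within @symmx R N, continuous (fun X => eig X k)}.
Proof.
by move=> kN; apply: lipschitz_within_continuous => X Y XtX YtY; exact: eig_lipschitz.
Qed.

Lemma F_H_continuous (R : realType) N Omega (H : R -> R) w r p :
  continuous H -> {within @symmx R N, continuous (@F_H R N Omega H w r p)}.
Proof.
move=> H_cont; apply/subspace_continuousP => X XtX; apply: cvgN.
apply: (@cvg_big _ _ +%R 0 xpredT add_continuous) => j _.
apply: continuous_cvg; first exact: H_cont.
by have /subspace_continuousP := @eig_continuous R N j (ltn_ord j); apply.
Qed.

Section IncreasingContinuous.
Variables (R : realType) (H : R -> R).
Hypotheses (H_incr : {homo H : s t / s < t}) (H_cont : continuous H).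

Lemma increasing_continuous_surj : (forall m, exists t, m < H t) ->
  (forall m, exists t, H t < m) -> forall y, exists t, H t = y.
Proof.
move=> H_up H_down y; have [b yb] := H_up y; have [a ay] := H_down y.
have ab : a <= b by rewrite -(le_mono H_incr); apply/ltW/(lt_trans ay).
have Hab := ltW_homo H_incr ab.
have Hy : Num.min (H a) (H b) <= y <= Num.max (H a) (H b).
  by rewrite (min_idPl Hab) (max_idPr Hab) !ltW.
by have [c _ Hc] := IVT ab (continuous_subspaceT H_cont) Hy; exists c.
Qed.

Lemma inverse_continuous (Hinv : R -> R) : cancel Hinv H -> continuous Hinv.
Proof.
move=> HinvK y; have HK : cancel H Hinv by move=> t; apply: (inc_inj (le_mono H_incr)).
have HK_near : {near Hinv y, cancel H Hinv}
  by apply: (@nearW _ _ _ (nbhs_filter (Hinv y))) => t; exact: HK.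
have H_cont_near : {near Hinv y, continuous H}
  by apply: (@nearW _ _ _ (nbhs_filter (Hinv y))) => t; exact: H_cont.
by have := nbhs_singleton (near_can_continuous HK_near H_cont_near); rewrite HinvK.
Qed.

Lemma shifted_increasing_bijection (Hinv : R -> R) (c : R) : cancel Hinv H ->
  (forall s t, s <= t -> H s + c <= H t + c) /\ bijective (fun t => H t + c) /\
  H (Hinv (- c)) + c = 0.
Proof.
move=> HinvK; split; first by move=> s t st; rewrite lerD2r (ltW_homo H_incr).
split; last by rewrite HinvK addNr.
have HK : cancel H Hinv by move=> t; apply: (inc_inj (le_mono H_incr)).
by exists (fun y => Hinv (y - c)) => [t|y]; rewrite ?addrK ?HK // HinvK subrK.
Qed.

End IncreasingContinuous.

Lemma eig_bound_continuous (R : realType) N : continuous (@eig_bound R N).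
Proof.
by move=> M; exact: (continuous_comp (@norm_continuous _ _ M) (@mulrl_continuous R _ _)).
Qed.

Lemma F_H_scalar (R : realType) N Omega (H : R -> R) w r p (t : R) :
  - @F_H R N Omega H w r p t%:M = N%:R * H t.
Proof.
rewrite opprK (eq_bigr (fun=> H t)) => [|j _]; last by rewrite eig_scalar.
by rewrite sumr_const card_ord mulr_natl.
Qed.

Section ClassM.
Variables (R : realType) (H : R -> R) (n : nat).
Hypotheses (H_incr : {homo H : s t / s < t}) (H_cont : continuous H).
Implicit Types X Y M : 'M[R]_n.+1.

Lemma sum_H_eig_le X M : X^T = X -> loewner_le X M ->
  \sum_(j < n.+1) H (eig X j) <= H (lambda_min X) + n%:R * H (eig_bound M).
Proof.
move=> XtX XM; rewrite big_ord_recl lerD2l.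
rewrite [leRHS](_ : _ = \sum_(j < n) H (eig_bound M)); last first.
  by rewrite sumr_const card_ord mulr_natl.
by apply: ler_sum => j _; apply/(ltW_homo H_incr)/eig_le_loewner.
Qed.

Lemma sum_H_eig_ge Y M : Y^T = Y -> loewner_le (- Y) M ->
  H (lambda_max Y) + n%:R * H (- eig_bound M) <= \sum_(j < n.+1) H (eig Y j).
Proof.
move=> YtY YM; rewrite big_ord_recr addrC lerD2r.
rewrite [leLHS](_ : _ = \sum_(j < n) H (- eig_bound M)); last first.
  by rewrite sumr_const card_ord mulr_natl.
by apply: ler_sum => j _; apply/(ltW_homo H_incr)/eig_ge_loewner.
Qed.

Lemma unbounded_F_H_classM Omega : (forall m, exists t, m < H t) ->
  (forall m, exists t, H t < m) -> ClassM (@F_H R n.+1 Omega H).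
Proof.
move=> H_up H_down.
have [Hinv HinvK] := boolp.choice (increasing_continuous_surj H_incr H_cont H_up H_down).
have zero_cont (phi : 'M[R]_n.+1 -> R) : continuous phi ->
    continuous (fun M => Hinv (- (n%:R * H (phi M)))).
  move=> phi_cont M.
  apply: (@continuous_comp _ _ _ (fun M => - (n%:R * H (phi M))) Hinv).
    apply: continuousN; apply: (@continuous_comp _ _ _ (H \o phi) ( *%R n%:R)).
      by apply: continuous_comp; [exact: phi_cont | exact: H_cont].
    exact: mulrl_continuous.
  exact: (inverse_continuous H_incr H_cont HinvK).
split => [w r p|w S1 S2 _ _]; first exact: F_H_continuous.
exists (fun t M => H t + n%:R * H (eig_bound M)).
exists (fun t M => H t + n%:R * H (- eig_bound M)).
exists (fun M => Hinv (- (n%:R * H (eig_bound M)))).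
exists (fun M => Hinv (- (n%:R * H (- eig_bound M)))).
split; [|split; [|split; [|split; [|split]]]].
- by move=> M0 _; apply: shifted_increasing_bijection.
- by move=> M0 _; apply: shifted_increasing_bijection.
- by apply/continuous_subspaceT/zero_cont/eig_bound_continuous.
- apply/continuous_subspaceT/zero_cont => M.
  exact/continuousN/eig_bound_continuous.
- by move=> M _ r p X XtX XM; rewrite /F_H opprK; apply: sum_H_eig_le.
- by move=> M _ r p Y YtY YM; rewrite /F_H opprK; apply: sum_H_eig_ge.
Qed.

Lemma classM_F_H_unbounded Omega (w0 : Omega) : ClassM (@F_H R n.+1 Omega H) ->
  (forall m, exists t, m < H t) /\ (forall m, exists t, H t < m).
Proof.
have zero_sym : [set 0 : 'M[R]_n.+1] `<=` @symmx R n.+1.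
  by move=> X ->; rewrite /symmx /= trmx0.
case=> _ /(_ w0 _ _ zero_sym zero_sym).
move=> [g1 [g2 [h1 [h2 [g1P [g2P [_ [_ [g1_ub g2_lb]]]]]]]]].
have [g1_mono [[g1inv _ g1invK] _]] := g1P 0 erefl.
have [g2_mono [[g2inv _ g2invK] _]] := g2P 0 erefl.
have N_gt0 : (0 : R) < n.+1%:R by rewrite ltr0Sn.
split=> m.
- pose t := Num.max (g2inv (n.+1%:R * m + 1)) 0; exists t.
  have tM : loewner_le (- t%:M : 'M[R]_n.+1) 0.
    by rewrite -raddfN; apply: loewner_scalar_le0; rewrite oppr_le0 le_max lexx orbT.
  have := g2_lb 0 erefl 0 0 t%:M (tr_scalar_mx _ t) tM.
  rewrite F_H_scalar /lambda_max eig_scalar //.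
  have s_le_t : g2inv (n.+1%:R * m + 1) <= t by rewrite le_max lexx.
  have := g2_mono _ _ s_le_t; rewrite g2invK => ? ?.
  by rewrite -(ltr_pM2l N_gt0); lra.
- pose t := Num.min (g1inv (n.+1%:R * m - 1)) 0; exists t.
  have tM : loewner_le (t%:M : 'M[R]_n.+1) 0.
    by apply: loewner_scalar_le0; rewrite ge_min lexx orbT.
  have := g1_ub 0 erefl 0 0 t%:M (tr_scalar_mx _ t) tM.
  rewrite F_H_scalar /lambda_min eig_scalar //.
  have t_le_s : t <= g1inv (n.+1%:R * m - 1) by rewrite ge_min lexx.
  have := g1_mono _ _ t_le_s; rewrite g1invK => ? ?.
  by rewrite -(ltr_pM2l N_gt0); lra.
Qed.

End ClassM.

Theorem proposition2 (R : realType) (n : nat) (Omega : Type) (w0 : Omega)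
    (H : R -> R)
    (H_incr : forall s t : R, s < t -> H s < H t)
    (H_cont : continuous H) :
  ClassM (@F_H R n.+1 Omega H) <->
  ((forall m : R, exists t : R, m < H t) /\ (forall m : R, exists t : R, H t < m)).
Proof.
split; first exact: classM_F_H_unbounded.
by case; apply: unbounded_F_H_classM.
Qed.
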